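(* Let $\mathbf{w}_1,\dots,\mathbf{w}_6:\mathbb{R}\to\mathbb{R}^7$ be differentiable functions satisfying $$\tfrac{d\mathbf{w}_1}{dt}=2\mathbf{w}_2\times\mathbf{w}_3,\quad \tfrac{d\mathbf{w}_2}{dt}=2\mathbf{w}_1\times\mathbf{w}_3,\quad \tfrac{d\mathbf{w}_3}{dt}=-2\mathbf{w}_1\times\mathbf{w}_2,$$ $$\tfrac{d\mathbf{w}_4}{dt}=\mathbf{w}_1\times\mathbf{w}_5+\mathbf{w}_2\times\mathbf{w}_5-\mathbf{w}_3\times\mathbf{w}_4,\quad \tfrac{d\mathbf{w}_5}{dt}=-\mathbf{w}_1\times\mathbf{w}_4+\mathbf{w}_2\times\mathbf{w}_4+\mathbf{w}_3\times\mathbf{w}_5,\quad \tfrac{d\mathbf{w}_6}{dt}=\mathbf{w}_4\times\mathbf{w}_5 .$$ Then $$M=\Big\{\tfrac12(y_1^2+y_2^2)\mathbf{w}_1(t)+\tfrac12(y_1^2-y_2^2)\mathbf{w}_2(t)+y_1y_2\mathbf{w}_3(t)+y_1\mathbf{w}_4(t)+y_2\mathbf{w}_5(t)+\mathbf{w}_6(t):y_1,y_2,t\in\mathbb{R}\Big\}$$ is an associative 3-fold in $\mathbb{R}^7$ wherever it is nonsingular.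
   Context: Let $(x_1,\dots,x_7)$ be coordinates on $\mathbb{R}^7$ with Euclidean metric $g$, and write $dx_{ijk}=dx_i\wedge dx_j\wedge dx_k$. Define $\varphi=dx_{123}+dx_{145}+dx_{167}+dx_{246}-dx_{257}-dx_{347}-dx_{356}$. The cross product $\times$ on $\mathbb{R}^7$ is defined by $g(u\times v,w)=\varphi(u,v,w)$ for all $u,v,w\in\mathbb{R}^7$. An oriented 3-dimensional (immersed) submanifold $N\subseteq\mathbb{R}^7$ is an associative 3-fold if $\varphi|_{T_xN}=\mathrm{vol}_{T_xN}$ for all $x\in N$. *)

From HB Require Import structures.
From mathcomp Require Import all_boot all_order all_algebra.
From mathcomp Require Import all_classical all_reals all_analysis.
Set Implicit Arguments. Unset Strict Implicit. Unset Printing Implicit Defensive.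
Import Order.TTheory GRing.Theory Num.Theory.
Import numFieldNormedType.Exports.
Local Open Scope ring_scope.

Section G2.
Variable R : realType.

(* 1-based coordinate access: coord u i = x_i(u), i in 1..7 *)
Definition coord (u : 'rV[R]_7) (i : nat) : R := u 0 (inord i.-1).

Definition dx (i j k : nat) (u v w : 'rV[R]_7) : R :=
  let idx (a : 'I_3) := nth 0%N [:: i; j; k] a in
  let vec (a : 'I_3) := nth u [:: u; v; w] a in
  \det (\matrix_(a < 3, b < 3) coord (vec a) (idx b)).

Definition phi (u v w : 'rV[R]_7) : R :=
  dx 1 2 3 u v w + dx 1 4 5 u v w + dx 1 6 7 u v w + dx 2 4 6 u v w
  - dx 2 5 7 u v w - dx 3 4 7 u v w - dx 3 5 6 u v w.

Definition ebasis (k : 'I_7) : 'rV[R]_7 := delta_mx 0 k.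

(* Cross product: g(u x v, w) = phi(u,v,w), i.e. (u x v)_k = phi(u,v,e_k) *)
Definition cross (u v : 'rV[R]_7) : 'rV[R]_7 := \row_k phi u v (ebasis k).

Definition mx3 (u v w : 'rV[R]_7) : 'M[R]_(3, 7) :=
  \matrix_(a < 3) nth u [:: u; v; w] a.

(* The oriented 3-plane spanned by the basis (u,v,w), with one of its two
   orientations, is calibrated by phi: phi restricted to the plane equals the
   volume form. The volume form of span(u,v,w) evaluated on (u,v,w) is
   +- sqrt(det Gram(u,v,w)), the sign depending on the chosen orientation. *)
Definition associative_plane (u v w : 'rV[R]_7) : Prop :=
  exists s : R, (s = 1 \/ s = -1) /\
    phi u v w = s * Num.sqrt (\det (mx3 u v w *m (mx3 u v w)^T)).

End G2.

Definition paramM (R : realType) (w1 w2 w3 w4 w5 w6 : R -> 'rV[R]_7)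
    (y1 y2 t : R) : 'rV[R]_7 :=
  (2^-1 * (y1 ^+ 2 + y2 ^+ 2)) *: w1 t + (2^-1 * (y1 ^+ 2 - y2 ^+ 2)) *: w2 t
  + (y1 * y2) *: w3 t + y1 *: w4 t + y2 *: w5 t + w6 t.

(* Along the flow the parametrization F satisfies dF/dt = dF/dy1 x dF/dy2:
   with dF/dy1 = y1 w1 + y1 w2 + y2 w3 + w4 and dF/dy2 = y2 w1 - y2 w2 + y1 w3 + w5,
   expanding the cross product bilinearly (u x u = 0, v x u = - u x v) reproduces
   term by term the t-derivative prescribed by the ODE system.  A 3-plane spanned
   by u, v, u x v is always calibrated by phi: phi(u, v, u x v) = |u x v|^2, while
   u x v is orthogonal to u and v, so the Gram determinant of (u, v, u x v) is
   (|u|^2 |v|^2 - <u,v>^2) |u x v|^2 = |u x v|^4 by Lagrange's identity. *)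

From Pilot Require Import Defs.
From HB Require Import structures.
From mathcomp Require Import all_boot all_order all_algebra.
From mathcomp Require Import all_classical all_reals all_analysis.
From mathcomp Require Import ring.
Import Order.TTheory GRing.Theory Num.Theory.
Import numFieldNormedType.Exports.
Set Implicit Arguments. Unset Strict Implicit. Unset Printing Implicit Defensive.
Local Open Scope ring_scope.

Lemma det3E (R : comPzRingType) (f : nat -> nat -> R) :
  \det (\matrix_(i < 3, j < 3) f i j) =
  f 0 0 * (f 1 1 * f 2 2 - f 1 2 * f 2 1)
  - f 0 1 * (f 1 0 * f 2 2 - f 1 2 * f 2 0)
  + f 0 2 * (f 1 0 * f 2 1 - f 1 1 * f 2 0).
Proof.
rewrite (expand_det_row _ ord0) !big_ord_recl big_ord0 /cofactor.
rewrite !(expand_det_row _ ord0) !big_ord_recl !big_ord0 /cofactor !det_mx11.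
by rewrite !mxE /= /bump /=; ring.
Qed.

Section G2Algebra.
Variable R : realType.
Implicit Types u v w : 'rV[R]_7.
(* Plain [coord] would resolve to [vector.coord]. *)
Local Notation coord := Defs.coord.
Local Notation minor u v i j := (coord u i * coord v j - coord u j * coord v i).

Lemma coordD u v i : coord (u + v) i = coord u i + coord v i.
Proof. by rewrite /Defs.coord mxE. Qed.

Lemma coordN u i : coord (- u) i = - coord u i.
Proof. by rewrite /Defs.coord mxE. Qed.

Lemma coordZ a u i : coord (a *: u) i = a * coord u i.
Proof. by rewrite /Defs.coord mxE. Qed.

Lemma eq_row7_coords u v :
  coord u 1 = coord v 1 -> coord u 2 = coord v 2 -> coord u 3 = coord v 3 ->
  coord u 4 = coord v 4 -> coord u 5 = coord v 5 -> coord u 6 = coord v 6 ->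
  coord u 7 = coord v 7 -> u = v.
Proof.
move=> e1 e2 e3 e4 e5 e6 e7; apply/rowP => k.
have entry_coord w : w 0 k = coord w k.+1 by rewrite /Defs.coord inord_val.
by rewrite !entry_coord {entry_coord}; case: k => [[|[|[|[|[|[|[|k]]]]]]]].
Qed.

Lemma coord_ebasis i j : (0 < i < 8)%N -> (0 < j < 8)%N ->
  coord (ebasis R (inord i.-1)) j = (i == j)%:R.
Proof.
case: i => // i /andP[_ i7]; case: j => // j /andP[_ j7].
rewrite /Defs.coord /ebasis mxE eqxx /= -(inj_eq val_inj) /= !inordK //.
by rewrite eqSS eq_sym.
Qed.

Lemma dxE i j k u v w : dx i j k u v w =
  coord u i * minor v w j k - coord u j * minor v w i k + coord u k * minor v w i j.
Proof.
by rewrite /dx (det3E (fun a b => coord (nth u [:: u; v; w] a) (nth 0%N [:: i; j; k] b))).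
Qed.

Lemma coord_cross i u v : coord (cross u v) i = phi u v (ebasis R (inord i.-1)).
Proof. by rewrite /Defs.coord /cross mxE. Qed.

Ltac cross_coord := by rewrite coord_cross /phi !dxE !coord_ebasis //=; ring.

Lemma coord_cross1 u v : coord (cross u v) 1 = minor u v 2 3 + minor u v 4 5 + minor u v 6 7.
Proof. cross_coord. Qed.
Lemma coord_cross2 u v : coord (cross u v) 2 = - minor u v 1 3 + minor u v 4 6 - minor u v 5 7.
Proof. cross_coord. Qed.
Lemma coord_cross3 u v : coord (cross u v) 3 = minor u v 1 2 - minor u v 4 7 - minor u v 5 6.
Proof. cross_coord. Qed.
Lemma coord_cross4 u v : coord (cross u v) 4 = - minor u v 1 5 - minor u v 2 6 + minor u v 3 7.
Proof. cross_coord. Qed.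
Lemma coord_cross5 u v : coord (cross u v) 5 = minor u v 1 4 + minor u v 2 7 + minor u v 3 6.
Proof. cross_coord. Qed.
Lemma coord_cross6 u v : coord (cross u v) 6 = - minor u v 1 7 + minor u v 2 4 - minor u v 3 5.
Proof. cross_coord. Qed.
Lemma coord_cross7 u v : coord (cross u v) 7 = minor u v 1 6 - minor u v 2 5 - minor u v 3 4.
Proof. cross_coord. Qed.

Definition coord_crossE := (coord_cross1, coord_cross2, coord_cross3,
  coord_cross4, coord_cross5, coord_cross6, coord_cross7).

Definition dot u v : R := \sum_(k < 7) u 0 k * v 0 k.

Lemma dotC u v : dot u v = dot v u.
Proof. by apply: eq_bigr => k _; rewrite mulrC. Qed.

Lemma dot_ge0 u : 0 <= dot u u.
Proof. by apply: sumr_ge0 => k _; exact: sqr_ge0. Qed.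

Lemma dot_coordE u v : dot u v = coord u 1 * coord v 1 + coord u 2 * coord v 2
  + coord u 3 * coord v 3 + coord u 4 * coord v 4 + coord u 5 * coord v 5
  + coord u 6 * coord v 6 + coord u 7 * coord v 7.
Proof.
have -> : dot u v = \sum_(0 <= n < 7) coord u n.+1 * coord v n.+1.
  by rewrite big_mkord; apply: eq_bigr => k _; rewrite /Defs.coord /= inord_val.
by rewrite !big_nat_recl // big_geq // addr0 !addrA.
Qed.

Lemma phi_dot_cross u v w : phi u v w = dot (cross u v) w.
Proof. by rewrite /phi !dxE dot_coordE !coord_crossE; ring. Qed.

Lemma dot_cross_l u v : dot u (cross u v) = 0.
Proof. by rewrite dot_coordE !coord_crossE; ring. Qed.

Lemma dot_cross_r u v : dot v (cross u v) = 0.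
Proof. by rewrite dot_coordE !coord_crossE; ring. Qed.

Lemma dot_cross u v :
  dot (cross u v) (cross u v) = dot u u * dot v v - dot u v ^+ 2.
Proof. by rewrite !dot_coordE !coord_crossE; ring. Qed.

Lemma gram_mx3 u v w : mx3 u v w *m (mx3 u v w)^T =
  \matrix_(a < 3, b < 3) dot (nth u [:: u; v; w] a) (nth u [:: u; v; w] b).
Proof. by apply/matrixP => a b; rewrite !mxE; apply: eq_bigr => k _; rewrite !mxE. Qed.

Lemma associative_plane_cross u v : associative_plane u v (cross u v).
Proof.
set w := cross u v.
have gram_det : \det (mx3 u v w *m (mx3 u v w)^T) = dot w w ^+ 2.
  rewrite gram_mx3 /=.
  rewrite (det3E (fun a b => dot (nth u [:: u; v; w] a) (nth u [:: u; v; w] b))) /=.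
  rewrite [dot w u]dotC [dot w v]dotC [dot v u]dotC dot_cross_l dot_cross_r /w dot_cross.
  ring.
exists 1; split; first by left.
by rewrite gram_det sqrtr_sqr ger0_norm ?dot_ge0 // mul1r phi_dot_cross.
Qed.

End G2Algebra.

Lemma is_deriveZl (R : realType) (V : normedModType R) (f : R -> R) (c : V) (x df : R) :
  is_derive x 1 f df -> is_derive x 1 (fun s => f s *: c) (df *: c).
Proof.
move=> fx; have df1 : differentiable f x by apply/derivable1_diffP.
apply: DeriveDef; first exact/diff_derivable/differentiableZl.
rewrite deriveE; last exact: differentiableZl.
by rewrite diffZl // -deriveE // derive_val.
Qed.
#[local] Existing Instance is_deriveZl.

Section ParamDerivatives.
Variables (R : realType) (w1 w2 w3 w4 w5 w6 : R -> 'rV[R]_7).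
Local Notation F := (paramM w1 w2 w3 w4 w5 w6).

Lemma derive1_paramM_y1 y1 y2 t :
  derive1 (fun s => F s y2 t) y1 = y1 *: w1 t + y1 *: w2 t + y2 *: w3 t + w4 t.
Proof.
rewrite derive1E; apply: derive_val; apply: is_derive_eq.
have half_sum : 2^-1 * (y1 * 1 + y1 * 1 + 0) = y1 by field.
have half_diff : 2^-1 * (y1 * 1 + y1 * 1 - 0) = y1 by field.
by rewrite [X in X *: w1 t]half_sum [X in X *: w2 t]half_diff !scale1r !addr0.
Qed.

Lemma derive1_paramM_y2 y1 y2 t :
  derive1 (fun s => F y1 s t) y2 = y2 *: w1 t - y2 *: w2 t + y1 *: w3 t + w5 t.
Proof.
rewrite derive1E; apply: derive_val; apply: is_derive_eq.
have half_sum : 2^-1 * ((0 + 1) * (y2 * 1 + y2 * 1)) = y2 by field.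
have half_diff : 2^-1 * ((0 + 1) * - (y2 * 1 + y2 * 1)) = - y2 by field.
have scalar_y1 : y1%:A = y1 :> R by exact: mulr1.
by rewrite [X in X *: w1 t]half_sum [X in X *: w2 t]half_diff scalar_y1 scale1r !addr0 scaleNr.
Qed.

Lemma derive1_paramM_t (d1 d2 d3 d4 d5 d6 : R -> 'rV[R]_7) (y1 y2 t : R) :
  (forall t : R, is_derive t 1 w1 (d1 t)) -> (forall t : R, is_derive t 1 w2 (d2 t)) ->
  (forall t : R, is_derive t 1 w3 (d3 t)) -> (forall t : R, is_derive t 1 w4 (d4 t)) ->
  (forall t : R, is_derive t 1 w5 (d5 t)) -> (forall t : R, is_derive t 1 w6 (d6 t)) ->
  derive1 (fun s => F y1 y2 s) t =
  (2^-1 * (y1 ^+ 2 + y2 ^+ 2)) *: d1 t + (2^-1 * (y1 ^+ 2 - y2 ^+ 2)) *: d2 t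
  + (y1 * y2) *: d3 t + y1 *: d4 t + y2 *: d5 t + d6 t.
Proof. by move=> *; rewrite derive1E; apply: derive_val. Qed.

End ParamDerivatives.

Section AssociativeFlow.
Variables (R : realType) (w1 w2 w3 w4 w5 w6 : R -> 'rV[R]_7).
Hypothesis dw1 : forall t : R, is_derive t (1 : R) w1 (2 *: cross (w2 t) (w3 t)).
Hypothesis dw2 : forall t : R, is_derive t (1 : R) w2 (2 *: cross (w1 t) (w3 t)).
Hypothesis dw3 : forall t : R, is_derive t (1 : R) w3 (- (2 *: cross (w1 t) (w2 t))).
Hypothesis dw4 : forall t : R, is_derive t (1 : R) w4
  (cross (w1 t) (w5 t) + cross (w2 t) (w5 t) - cross (w3 t) (w4 t)).
Hypothesis dw5 : forall t : R, is_derive t (1 : R) w5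
  (- cross (w1 t) (w4 t) + cross (w2 t) (w4 t) + cross (w3 t) (w5 t)).
Hypothesis dw6 : forall t : R, is_derive t (1 : R) w6 (cross (w4 t) (w5 t)).
Local Notation F := (paramM w1 w2 w3 w4 w5 w6).

Lemma derive1_paramM_t_cross y1 y2 t :
  derive1 (fun s => F y1 y2 s) t =
  cross (derive1 (fun s => F s y2 t) y1) (derive1 (fun s => F y1 s t) y2).
Proof.
rewrite (derive1_paramM_t y1 y2 t dw1 dw2 dw3 dw4 dw5 dw6).
rewrite derive1_paramM_y1 derive1_paramM_y2.
by apply: eq_row7_coords; rewrite !(coordD, coordN, coordZ, coord_crossE); field.
Qed.

End AssociativeFlow.

Theorem theorem5p3 (R : realType) (w1 w2 w3 w4 w5 w6 : R -> 'rV[R]_7) :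
  (forall t : R, is_derive t (1 : R) w1 (2 *: cross (w2 t) (w3 t))) ->
  (forall t : R, is_derive t (1 : R) w2 (2 *: cross (w1 t) (w3 t))) ->
  (forall t : R, is_derive t (1 : R) w3 (- (2 *: cross (w1 t) (w2 t)))) ->
  (forall t : R, is_derive t (1 : R) w4
     (cross (w1 t) (w5 t) + cross (w2 t) (w5 t) - cross (w3 t) (w4 t))) ->
  (forall t : R, is_derive t (1 : R) w5
     (- cross (w1 t) (w4 t) + cross (w2 t) (w4 t) + cross (w3 t) (w5 t))) ->
  (forall t : R, is_derive t (1 : R) w6 (cross (w4 t) (w5 t))) ->
  forall y1 y2 t : R,
    let F := paramM w1 w2 w3 w4 w5 w6 in
    let Fy1 := derive1 (fun s => F s y2 t) y1 in
    let Fy2 := derive1 (fun s => F y1 s t) y2 in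
    let Ft := derive1 (fun s => F y1 y2 s) t in
    (* nonsingular point: the differential of the parametrization has rank 3 *)
    row_free (mx3 Fy1 Fy2 Ft) ->
    associative_plane Fy1 Fy2 Ft.
Proof.
(* The calibration identity holds at every point; nonsingularity is only what
   makes M an immersed 3-fold there. *)
move=> dw1 dw2 dw3 dw4 dw5 dw6 y1 y2 t F Fy1 Fy2 Ft _.
rewrite /Ft (derive1_paramM_t_cross dw1 dw2 dw3 dw4 dw5 dw6).
exact: associative_plane_cross.
Qed.
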